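(* Let $f:\{0,1\}^n\to\{0,1\}$ be total, $\epsilon\in[0,1/2)$, and $q$ a real polynomial with $q(x)\in[1-2\epsilon,1]$ whenever $f(x)=1$ and $q(x)\in[-1,-1+2\epsilon]$ whenever $f(x)=0$. Define the $2^n\times2^n$ matrix $B_q$ by $(B_q)_{xy}=\tfrac12(q(x)-q(y))$ if $|x\oplus y|=1$ and $(B_q)_{xy}=0$ otherwise. Then $\lambda(f)\le\frac{1}{1-2\epsilon}\|B_q\|$.
   Context: $|x\oplus y|$ is the Hamming distance. The sensitivity graph $G_f$ has vertex set $\{0,1\}^n$ and an edge between $x,y$ iff they differ in exactly one coordinate and $f(x)\ne f(y)$; $A_f$ is its adjacency matrix and $\lambda(f)=\|A_f\|$ (spectral norm). *)

From HB Require Import structures.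
From mathcomp Require Import all_boot all_order all_algebra.
From mathcomp Require Import classical_sets reals.
From mathcomp Require mpoly.
Set Implicit Arguments. Unset Strict Implicit. Unset Printing Implicit Defensive.
Import Order.TTheory GRing.Theory Num.Theory.
Local Open Scope ring_scope.

Definition cube (n : nat) := {ffun 'I_n -> bool}.

Definition hamming n (x y : cube n) : nat := #|[set i | x i != y i]|.

Definition cube_pt (R : ringType) n (x : cube n) : 'I_n -> R :=
  fun i => (x i)%:R.

Definition mxapp (R : ringType) (T : finType) (A : T -> T -> R) (v : T -> R)
  : T -> R := fun x => \sum_(y : T) A x y * v y.

Definition enorm (R : realType) (T : finType) (v : T -> R) : R :=
  Num.sqrt (\sum_(x : T) v x ^+ 2).

Definition spec_norm (R : realType) (T : finType) (A : T -> T -> R) : R :=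
  sup [set enorm (mxapp A v) | v in [set v : T -> R | enorm v <= 1]]%classic.

Definition sens_adj (R : ringType) n (f : cube n -> bool) : cube n -> cube n -> R :=
  fun x y => if (hamming x y == 1%N) && (f x != f y) then 1 else 0.

Definition lambda_f (R : realType) n (f : cube n -> bool) : R :=
  spec_norm (sens_adj R f).

Definition Bmat (R : fieldType) n (qv : cube n -> R) : cube n -> cube n -> R :=
  fun x y => if hamming x y == 1%N then (qv x - qv y) / 2 else 0.

From HB Require Import structures.
From mathcomp Require Import all_boot all_order all_algebra.
From mathcomp Require Import boolp classical_sets reals.
From mathcomp Require mpoly.
From mathcomp Require Import lra.
Import Order.TTheory GRing.Theory Num.Theory.
Local Open Scope ring_scope.
Set Implicit Arguments. Unset Strict Implicit.

(* Put c = 1 - 2 eps > 0, so that q >= c on f^{-1}(1) and q <= -c on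
   f^{-1}(0).  Given a vector v, split |v| into its restrictions w1 to
   f^{-1}(1) and w0 to f^{-1}(0) (abs_on true v and abs_on false v below).  For a fixed x with f x = 1, every
   sensitive neighbour y of x has f y = 0, hence q x - q y >= 2c, so
   c |(A_f v)_x| <= (B_q w0)_x; symmetrically, if f x = 0 then
   c |(A_f v)_x| <= -(B_q w1)_x (non-sensitive neighbours contribute
   nonnegative terms since w0, w1 >= 0 and q has constant sign on each side).
   Summing squares, c^2 |A_f v|^2 <= |B_q w0|^2 + |B_q w1|^2
   <= ||B_q||^2 (|w0|^2 + |w1|^2) = ||B_q||^2 |v|^2. *)

Section SpectralNorm.
Variables (R : realType) (T : finType).
Implicit Types (v w : T -> R) (M : T -> T -> R).

Definition sqnorm v : R := \sum_(x : T) v x ^+ 2.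

Lemma sqnorm_ge0 v : 0 <= sqnorm v.
Proof. by apply: sumr_ge0 => x _; rewrite sqr_ge0. Qed.

Lemma enorm_ge0 v : 0 <= enorm v.
Proof. exact: sqrtr_ge0. Qed.

Lemma sqr_enorm v : enorm v ^+ 2 = sqnorm v.
Proof. exact: sqr_sqrtr (sqnorm_ge0 v). Qed.

Lemma enorm0 : enorm (fun _ : T => 0 : R) = 0.
Proof. by rewrite /enorm big1 ?sqrtr0 // => x _; rewrite expr0n. Qed.

Lemma sqr_coord_le v y : v y ^+ 2 <= sqnorm v.
Proof.
rewrite /sqnorm (bigD1 y) //= lerDl; apply: sumr_ge0 => x _; exact: sqr_ge0.
Qed.

Lemma enorm_le_sqnorm v (k : R) :
  0 <= k -> (enorm v <= k) = (sqnorm v <= k ^+ 2).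
Proof. by move=> k0; rewrite -sqr_enorm ler_sqr ?nnegrE ?enorm_ge0. Qed.

Lemma coord_le1 v y : enorm v <= 1 -> `|v y| <= 1.
Proof.
rewrite enorm_le_sqnorm // expr1n => hv.
rewrite -(ler_sqr (R:=R)) ?nnegrE // real_normK ?num_real // expr1n.
exact: le_trans (sqr_coord_le v y) hv.
Qed.

Lemma enormZ (a : R) v : 0 <= a -> enorm (fun y => a * v y) = a * enorm v.
Proof.
move=> a0; rewrite /enorm.
under eq_bigr => y _ do rewrite exprMn.
by rewrite -mulr_sumr sqrtrM ?sqr_ge0 // sqrtr_sqr ger0_norm.
Qed.

Lemma mxappZ M (a : R) v : mxapp M (fun y => a * v y) = (fun x => a * mxapp M v x).
Proof.
by apply: funext => x; rewrite /mxapp mulr_sumr; apply: eq_bigr => y _; rewrite mulrCA.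
Qed.

Definition image_ball M :=
  [set enorm (mxapp M v) | v in [set v : T -> R | enorm v <= 1]]%classic.

Lemma image_ball_has_sup M : has_sup (image_ball M).
Proof.
split; first by exists (enorm (mxapp M (fun _ => 0))); exists (fun _ => 0); rewrite //= enorm0.
exists (Num.sqrt (\sum_x (\sum_y `|M x y|) ^+ 2)) => _ [v /= hv <-].
rewrite /enorm ler_sqrt; last by apply: sumr_ge0 => x _; rewrite sqr_ge0.
apply: ler_sum => x _.
rewrite -real_normK ?num_real // ler_sqr ?nnegrE //; last by apply: sumr_ge0.
apply: le_trans (ler_norm_sum _ _ _) _; apply: ler_sum => y _.
by rewrite normrM ler_piMr // coord_le1.
Qed.

Lemma spec_norm_ub M v : enorm v <= 1 -> enorm (mxapp M v) <= spec_norm M.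
Proof. by move=> hv; apply: sup_upper_bound (image_ball_has_sup M) _ _; exists v. Qed.

Lemma spec_norm_ge0 M : 0 <= spec_norm M.
Proof.
have zero_unit : enorm (fun _ : T => 0 : R) <= 1 by rewrite enorm0.
exact: le_trans (enorm_ge0 _) (spec_norm_ub M zero_unit).
Qed.

Lemma spec_norm_le M (k : R) :
  (forall v, enorm v <= 1 -> enorm (mxapp M v) <= k) -> spec_norm M <= k.
Proof.
move=> hk; apply: ge_sup; first by case: (image_ball_has_sup M).
by move=> _ [v /= hv <-]; exact: hk.
Qed.

(* The operator inequality |M w| <= ||M|| |w|, by rescaling w to the unit sphere. *)
Lemma spec_norm_bound M w : enorm (mxapp M w) <= spec_norm M * enorm w.
Proof.
have [w0|wpos] := eqVneq (enorm w) 0.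
  have -> : w = (fun _ => 0).
    apply: funext => y; apply/eqP; rewrite -sqrf_eq0 eq_le sqr_ge0 andbT.
    by have := sqr_coord_le w y; rewrite -sqr_enorm w0 expr0n.
  by rewrite /mxapp (_ : (fun x => _) = fun _ => 0) ?enorm0 ?mulr0 //;
    apply: funext => x; rewrite big1 // => y _; rewrite mulr0.
have tgt : 0 < enorm w by rewrite lt_def wpos enorm_ge0.
have inv_ge0 : 0 <= (enorm w)^-1 by rewrite invr_ge0 ltW.
have unit : enorm (fun y => (enorm w)^-1 * w y) <= 1.
  by rewrite (enormZ _ inv_ge0) mulVf.
have := spec_norm_ub M unit.
rewrite mxappZ (enormZ (mxapp M w) inv_ge0) => scaled.
by rewrite mulrC -ler_pdivrMl.
Qed.

Lemma sqnorm_bound M w : sqnorm (mxapp M w) <= spec_norm M ^+ 2 * sqnorm w.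
Proof.
have bound_ge0 : 0 <= spec_norm M * enorm w by rewrite mulr_ge0 ?spec_norm_ge0 ?enorm_ge0.
by rewrite -!sqr_enorm -exprMn ler_sqr ?nnegrE ?enorm_ge0 ?spec_norm_bound.
Qed.

End SpectralNorm.

Section SensitivityBound.
Variables (R : realType) (n : nat) (f : cube n -> bool) (qv : cube n -> R) (c : R).
Hypothesis c_gt0 : 0 < c.
Hypothesis qv_true : forall x, f x -> c <= qv x.
Hypothesis qv_false : forall x, ~~ f x -> qv x <= - c.

Let A := sens_adj R f.
Let B := Bmat qv.

Definition abs_on (b : bool) (v : cube n -> R) : cube n -> R :=
  fun y => if f y == b then `|v y| else 0.

Lemma sqnorm_abs_on v : sqnorm (abs_on true v) + sqnorm (abs_on false v) = sqnorm v.
Proof.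
rewrite /sqnorm -big_split /=; apply: eq_bigr => y _; rewrite /abs_on.
by case: (f y); rewrite expr0n /= ?add0r ?addr0 real_normK ?num_real.
Qed.

(* Termwise comparison at a point x: each sensitive edge at x contributes at
   least c |v y| to B_q |v|_{f^{-1}(~~ f x)}, with sign (-1)^{~~ f x}; all
   other edges contribute terms of that same sign. *)
Lemma sens_row_bound v x :
  c * `|mxapp A v x| <=
    (if f x then 1 else -1) * mxapp B (abs_on (~~ f x) v) x.
Proof.
apply: le_trans (_ : c * \sum_y `|A x y * v y| <= _).
  by rewrite ler_pM2l // ler_norm_sum.
rewrite mulr_sumr /mxapp mulr_sumr; apply: ler_sum => y _.
rewrite /A /B /sens_adj /Bmat /abs_on.
case: (hamming x y == 1%N) => /=; last by rewrite !(mul0r, mulr0, normr0).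
case hx: (f x); case hy: (f y) => /=; rewrite ?(mul0r, mulr0, normr0, mul1r) //.
- have qx := qv_true hx; have qy := qv_false (negbT hy).
  by apply: ler_wpM2r => //; lra.
- have qx := qv_false (negbT hx); have qy := qv_true hy.
  by rewrite mulrA mulN1r -mulNr; apply: ler_wpM2r => //; lra.
Qed.

Lemma sens_row_sqr_bound v x :
  c ^+ 2 * mxapp A v x ^+ 2 <=
    mxapp B (abs_on true v) x ^+ 2 + mxapp B (abs_on false v) x ^+ 2.
Proof.
have k0 : 0 <= c * `|mxapp A v x| := mulr_ge0 (ltW c_gt0) (normr_ge0 _).
have key := sens_row_bound v x.
rewrite -exprMn -real_normK ?num_real // normrM (gtr0_norm c_gt0).
apply: (@le_trans _ _ (((if f x then 1 else -1) * mxapp B (abs_on (~~ f x) v) x) ^+ 2)).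
  by rewrite ler_sqr ?nnegrE //; exact: le_trans key.
by case: (f x); rewrite /= ?mul1r ?mulN1r ?sqrrN ?lerDl ?lerDr sqr_ge0.
Qed.

Lemma sens_norm_bound v : c * enorm (mxapp A v) <= spec_norm B * enorm v.
Proof.
have lhs_ge0 : 0 <= c * enorm (mxapp A v) by rewrite mulr_ge0 ?enorm_ge0 ?ltW.
have rhs_ge0 : 0 <= spec_norm B * enorm v by rewrite mulr_ge0 ?spec_norm_ge0 ?enorm_ge0.
rewrite -ler_sqr ?nnegrE // !exprMn !sqr_enorm.
apply: le_trans (_ : sqnorm (mxapp B (abs_on true v)) +
                     sqnorm (mxapp B (abs_on false v)) <= _).
  by rewrite /sqnorm mulr_sumr -big_split; apply: ler_sum => x _; exact: sens_row_sqr_bound.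
by rewrite -(sqnorm_abs_on v) mulrDr lerD ?sqnorm_bound.
Qed.

Lemma sens_lambda_bound : c * lambda_f R f <= spec_norm B.
Proof.
rewrite mulrC -ler_pdivlMr //; apply: spec_norm_le => v hv.
rewrite ler_pdivlMr // mulrC; apply: le_trans (sens_norm_bound v) _.
by rewrite ler_piMr ?spec_norm_ge0.
Qed.

End SensitivityBound.

Theorem lemma4p13 (R : realType) (n : nat) (f : cube n -> bool) (eps : R)
  (q : mpoly.mpoly n R) :
  0 <= eps -> eps < 1 / 2 ->
  (forall x : cube n, f x ->
     1 - 2 * eps <= mpoly.meval (cube_pt R x) q <= 1) ->
  (forall x : cube n, ~~ f x ->
     -1 <= mpoly.meval (cube_pt R x) q <= -1 + 2 * eps) ->
  lambda_f R f <=
    (1 - 2 * eps)^-1 * spec_norm (Bmat (fun x => mpoly.meval (cube_pt R x) q)).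
Proof.
move=> eps_ge0 eps_lt H1 H0.
have c_gt0 : 0 < 1 - 2 * eps by lra.
rewrite mulrC ler_pdivlMr // mulrC.
apply: sens_lambda_bound => // x.
  by case/H1/andP.
by case/H0/andP => _; rewrite opprB addrC.
Qed.
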